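(* Let $G$ be a nilpotent group of class $5$. Then for all $g_1,g_2,h_1,h_2\in G$ and all $n\in\mathbb{N}$, in $G\wedge G$, $$((g_1\wedge h_1)(g_2\wedge h_2))^n = ([g_2,h_2]\wedge [[g_2,h_2],[g_1,h_1]])^{\binom{n}{3}} ([g_1,h_1]\wedge [[g_2,h_2],[g_1,h_1]])^{2\binom{n}{3}+\binom{n}{2}} ([g_2,h_2]\wedge [g_1,h_1])^{\binom{n}{2}} (g_1\wedge h_1)^n (g_2\wedge h_2)^n.$$
   Context: Conventions: ${}^g h = ghg^{-1}$, $[g,h]=ghg^{-1}h^{-1}$; $\binom{n}{r}=0$ if $r>n$. The nonabelian tensor square $G\otimes G$ is generated by symbols $g\otimes h$ subject to $gg'\otimes h=({}^g g'\otimes {}^g h)(g\otimes h)$ and $g\otimes hh'=(g\otimes h)({}^h g\otimes {}^h h')$; the exterior square $G\wedge G$ is its quotient by the subgroup generated by all $x\otimes x$, and $g\wedge h$ denotes the image of $g\otimes h$. *)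

(* groups are arbitrary
   (possibly infinite), so they are given as an explicit record. *)
From mathcomp Require Import all_boot.
Set Implicit Arguments. Unset Strict Implicit. Unset Printing Implicit Defensive.

Record group := Group {
  carrier :> Type;
  gmul : carrier -> carrier -> carrier;
  gone : carrier;
  ginv : carrier -> carrier;
  gmulA : forall x y z, gmul x (gmul y z) = gmul (gmul x y) z;
  gmul1 : forall x, gmul gone x = x;
  gmulV : forall x, gmul (ginv x) x = gone
}.

Section GroupOps.
Variable G : group.

Fixpoint gpow (x : G) (n : nat) : G :=
  match n with 0 => gone G | n'.+1 => gmul x (gpow x n') end.

Definition gconj (g h : G) : G := gmul (gmul g h) (ginv g).

Definition gcomm (g h : G) : G :=
  gmul (gmul (gmul g h) (ginv g)) (ginv h).

Inductive gen (S : G -> Prop) : G -> Prop :=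
| gen_in x : S x -> gen S x
| gen_one : gen S (gone G)
| gen_mul x y : gen S x -> gen S y -> gen S (gmul x y)
| gen_inv x : gen S x -> gen S (ginv x).

(* lower central series: lcs k = gamma_{k+1}(G);
   gamma_1 = G, gamma_{k+1} = [gamma_k, G]. *)
Fixpoint lcs (k : nat) : G -> Prop :=
  match k with
  | 0 => fun _ => True
  | k'.+1 => gen (fun z => exists x y, lcs k' x /\ z = gcomm x y)
  end.

Definition nilpotent_of_class (c : nat) : Prop :=
  forall x, lcs c x -> x = gone G.

(* An exterior pairing G x G -> W: a map satisfying the defining
   relations of the nonabelian exterior square G /\ G.  G /\ G is the
   universal such pairing, so an identity holds in G /\ G (between images
   of the generators g /\ h) iff it holds for every exterior pairing. *)
Definition exterior_pairing (W : group) (w : G -> G -> W) : Prop :=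
  [/\ (forall g g' h, w (gmul g g') h = gmul (w (gconj g g') (gconj g h)) (w g h)),
      (forall g h h', w g (gmul h h') = gmul (w g h) (w (gconj h g) (gconj h h')))
    & (forall x, w x x = gone W)].

End GroupOps.

(* Write g/\h for w g h.  The two tensor relations already give the
   crossed-module identities (g/\h)(u/\v)(g/\h)^-1 = ^[g,h]u /\ ^[g,h]v and
   [g/\h, u/\v] = [g,h] /\ [u,v].  With a = g1/\h1, b = g2/\h2 and
   d = [c2,c1] this gives Z := [b,a] = c2/\c1, Y := [a,Z] = c1/\d and
   X := [b,Z] = c2/\d.  In class 5 the commutator c2 lies in the fourth centre,
   so d lies in the second centre and commutes with every commutator; hence X
   and Y commute with every u/\v.  The theorem is then the collection formula
   for (ab)^n in a group where b and a commute up to Z, a and Z up to Y, b and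
   Z up to X, X commutes with a, b, Y, Z and Y commutes with a, Z. *)
From mathcomp Require Import all_boot.
From mathcomp Require Import zify.
Set Implicit Arguments. Unset Strict Implicit. Unset Printing Implicit Defensive.

Section GroupLaws.
Variable G : group.
Implicit Types x y z : G.

Lemma mulgV x : gmul x (ginv x) = gone G.
Proof.
rewrite -[gmul x (ginv x)]gmul1 -{1}(gmulV (ginv x)).
by rewrite -gmulA (gmulA (ginv x)) gmulV gmul1 gmulV.
Qed.

Lemma mulg1 x : gmul x (gone G) = x.
Proof. by rewrite -(gmulV x) gmulA mulgV gmul1. Qed.

Lemma mulKg x y : gmul (ginv x) (gmul x y) = y.
Proof. by rewrite gmulA gmulV gmul1. Qed.

Lemma mulKVg x y : gmul x (gmul (ginv x) y) = y.
Proof. by rewrite gmulA mulgV gmul1. Qed.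

Lemma mulgI x : injective (@gmul G x).
Proof. by move=> y z e; rewrite -(mulKg x y) e mulKg. Qed.

Lemma mulIg x : injective ((@gmul G)^~ x).
Proof. by move=> y z /= e; rewrite -(mulg1 y) -(mulgV x) gmulA e -gmulA mulgV mulg1. Qed.

Lemma mulg_eqV x y z : gmul x y = z -> x = gmul z (ginv y).
Proof. by move=> <-; rewrite -gmulA mulgV mulg1. Qed.

Lemma invgK x : ginv (ginv x) = x.
Proof. by apply: (@mulgI (ginv x)); rewrite mulgV gmulV. Qed.

Lemma invMg x y : ginv (gmul x y) = gmul (ginv y) (ginv x).
Proof. by apply: (@mulgI (gmul x y)); rewrite mulgV -gmulA mulKVg mulgV. Qed.

Lemma invg1 : ginv (gone G) = gone G.
Proof. by rewrite -{2}(gmulV (gone G)) mulg1. Qed.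

End GroupLaws.

Tactic Notation "gsimpl" := rewrite /gconj /gcomm;
  repeat progress rewrite -?gmulA ?gmul1 ?mulg1 ?gmulV ?mulgV ?mulKg ?mulKVg
    ?invMg ?invgK ?invg1.

Section UpperCentralSeries.
Variable G : group.
Implicit Types g h u x y : G.

Definition normal_subgroup (P : G -> Prop) :=
  [/\ P (gone G), (forall x y, P x -> P y -> P (gmul x y)),
      (forall x, P x -> P (ginv x)) & (forall g x, P x -> P (gconj g x))].

Lemma normal_center_mod P :
  normal_subgroup P -> normal_subgroup (fun x => forall y, P (gcomm x y)).
Proof.
case=> P1 PM PV PJ; split.
- by move=> y; have -> : gcomm (gone G) y = gone G by gsimpl.
- move=> x x' Px Px' y.
  have -> : gcomm (gmul x x') y = gmul (gconj x (gcomm x' y)) (gcomm x y) by gsimpl.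
  exact/PM/Px/PJ.
- move=> x Px y.
  have -> : gcomm (ginv x) y = gconj (ginv x) (ginv (gcomm x y)) by gsimpl.
  exact/PJ/PV.
- move=> g x Px y.
  have -> : gcomm (gconj g x) y = gconj g (gcomm x (gconj (ginv g) y)) by gsimpl.
  exact: PJ.
Qed.

Fixpoint upper_central (k : nat) : G -> Prop :=
  match k with
  | 0 => fun x => x = gone G
  | k'.+1 => fun x => forall y, upper_central k' (gcomm x y)
  end.

Lemma normal_upper_central k : normal_subgroup (upper_central k).
Proof.
elim: k => [|k IHk] /=; last exact: normal_center_mod.
split=> //.
- by move=> x y -> ->; rewrite gmul1.
- by move=> x ->; rewrite invg1.
- by move=> g x ->; gsimpl.
Qed.

Lemma commg_comm_normal P u g h : normal_subgroup P ->
  (forall y z, P (gcomm (gcomm u y) z)) -> P (gcomm u (gcomm g h)).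
Proof.
case=> _ PM _ PJ Pu.
have -> : gcomm u (gcomm g h) =
  gmul (gcomm (gcomm u g) (gmul g (gmul (gcomm u h) (gmul h (ginv g)))))
       (gconj g (gcomm (gcomm u h) (gmul h (gmul (ginv g) (ginv h))))) by gsimpl.
exact/PM/PJ.
Qed.

Lemma upper_central_commg_comm k u g h :
  upper_central k.+2 u -> upper_central k (gcomm u (gcomm g h)).
Proof. by move=> u_k2; apply: commg_comm_normal (normal_upper_central k) _. Qed.

Lemma lcs_upper_central c k j x :
  nilpotent_of_class G c -> k + j = c -> lcs k x -> upper_central j x.
Proof.
move=> nilG; elim: j k x => [|j IHj] k x /= kj_c lcs_x.
  by apply: nilG; rewrite -kj_c addn0.
move=> y; apply: (IHj k.+1); first by rewrite addSnnS.
by apply: gen_in; exists x, y.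
Qed.

Lemma commgC x y : gcomm x y = ginv (gcomm y x).
Proof. by gsimpl. Qed.

End UpperCentralSeries.

Section TensorPairing.
Variables (G W : group) (w : G -> G -> W).
Hypothesis pairingMl :
  forall g g' h, w (gmul g g') h = gmul (w (gconj g g') (gconj g h)) (w g h).
Hypothesis pairingMr :
  forall g h h', w g (gmul h h') = gmul (w g h) (w (gconj h g) (gconj h h')).
Implicit Types g h u v x y : G.

Lemma pairing1l h : w (gone G) h = gone W.
Proof.
have := pairingMl (gone G) (gone G) h; gsimpl => e.
by apply: (@mulgI _ (w (gone G) h)); rewrite mulg1.
Qed.

Lemma pairingVl x y : w (ginv x) y = ginv (w x (gconj (ginv x) y)).
Proof.
have := pairingMl (ginv x) x y; rewrite gmulV pairing1l => e.
apply: (@mulgI _ (w x (gconj (ginv x) y))).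
by rewrite mulgV e; congr (gmul (w _ _) _); gsimpl.
Qed.

Lemma pairing_mulJ_commg g h u v :
  gmul (w g h) (w u v) =
  gmul (w (gconj (gcomm g h) u) (gconj (gcomm g h) v)) (w g h).
Proof.
have expand g' h' :
    gmul (w g h) (w (gconj (gmul h g) g') (gconj (gmul h g) h')) =
    gmul (w (gconj (gmul g h) g') (gconj (gmul g h) h')) (w g h).
  (* Compare the two ways of expanding w (g g') (h h'). *)
  move: (pairingMr (gconj g g') (gconj g h) (gconj g h')) (pairingMr g h h')
    (pairingMl g g' (gmul h h')) (pairingMl g g' h)
    (pairingMl (gconj h g) (gconj h g') (gconj h h')) (pairingMr (gmul g g') h h').
  gsimpl => A2 A3 A1 B2 B3 B1.
  rewrite A2 A3 in A1; rewrite B2 B3 A1 in B1; move: B1; gsimpl.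
  by move/mulgI; rewrite !gmulA => /mulIg; gsimpl.
have := expand (gconj (ginv (gmul h g)) u) (gconj (ginv (gmul h g)) v).
by gsimpl.
Qed.

Lemma pairing_comml g h y :
  w (gcomm g h) y = gmul (w g h) (ginv (w (gconj y g) (gconj y h))).
Proof.
move: (pairingMl g (gmul h (gmul (ginv g) (ginv h))) y)
  (pairingVl (gconj (gmul g h) g) (gconj g y)) (pairing_mulJ_commg g h (gconj h g) y)
  (pairingMr g y h) (pairingMr g h (gconj (ginv h) y)).
gsimpl => -> -> commute_gh expand_yh expand_hy.
rewrite -expand_hy expand_yh in commute_gh.
by rewrite (mulg_eqV commute_gh); gsimpl.
Qed.

Lemma commg_pairing g h u v : gcomm (w g h) (w u v) = w (gcomm g h) (gcomm u v).
Proof.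
by rewrite pairing_comml (mulg_eqV (esym (pairing_mulJ_commg u v g h))); gsimpl.
Qed.

End TensorPairing.

Section Collection.
Variable W : group.
Implicit Types x y z : W.

Definition commute x y := gmul x y = gmul y x.

Lemma commute_sym x y : commute x y -> commute y x.
Proof. by []. Qed.

Lemma gpowD x m n : gpow x (m + n) = gmul (gpow x m) (gpow x n).
Proof. by elim: m => [|m IHm] /=; rewrite ?gmul1 // IHm gmulA. Qed.

Lemma commute_gpowr x y n : commute x y -> commute x (gpow y n).
Proof.
rewrite /commute => cxy; elim: n => [|n IHn] /=; first by rewrite gmul1 mulg1.
by rewrite gmulA cxy -gmulA IHn gmulA.
Qed.

Lemma commute_gpow x y m n : commute x y -> commute (gpow x m) (gpow y n).
Proof. by move=> cxy; apply/commute_sym/commute_gpowr/commute_sym/commute_gpowr. Qed.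

Lemma gpowSr x n : gpow x n.+1 = gmul (gpow x n) x.
Proof. by rewrite /= (commute_gpowr n (erefl (gmul x x))). Qed.

Lemma mulgA_commute x y r : commute x y -> gmul y (gmul x r) = gmul x (gmul y r).
Proof. by move=> cxy; rewrite gmulA -cxy -gmulA. Qed.

Lemma commg_mul x y z : gcomm x y = z -> gmul x y = gmul z (gmul y x).
Proof. by move=> <-; gsimpl. Qed.

Lemma commg1_commute x y : gcomm x y = gone W -> commute x y.
Proof. by move/commg_mul; rewrite gmul1. Qed.

Lemma double_bin2_add n : 2 * 'C(n, 2) + n = n * n.
Proof. by elim: n => [|n IHn] //; rewrite binS bin1; lia. Qed.

Variables a b X Y Z : W.
Hypotheses (Zba : gcomm b a = Z) (YaZ : gcomm a Z = Y) (XbZ : gcomm b Z = X).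
Hypotheses (cXa : commute X a) (cXb : commute X b) (cXZ : commute X Z)
  (cXY : commute X Y) (cYa : commute Y a) (cYZ : commute Y Z).

Lemma mulg_gpowZ (c : W) C n : gmul c Z = gmul C (gmul Z c) -> commute C Z ->
  gmul c (gpow Z n) = gmul (gpow C n) (gmul (gpow Z n) c).
Proof.
move=> cZ cCZ; elim: n => [|n IHn] /=; first by rewrite !gmul1 mulg1.
rewrite gmulA cZ -!gmulA IHn; congr (gmul _ _).
by rewrite gmulA (commute_gpowr n (commute_sym cCZ)) -gmulA.
Qed.

Lemma gpow_mul_ba n :
  gmul (gpow b n) a = gmul (gpow X 'C(n, 2)) (gmul (gpow Z n) (gmul a (gpow b n))).
Proof.
elim: n => [|n IHn] /=; first by rewrite !gmul1 mulg1.
rewrite -gmulA IHn gmulA (commute_gpowr _ (commute_sym cXb)) -gmulA (gmulA b).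
rewrite (mulg_gpowZ _ (commg_mul XbZ) cXZ) binS bin1 gpowD -!gmulA.
congr (gmul _ _); congr (gmul _ _).
rewrite (gmulA b a) (commg_mul Zba) -!gmulA gmulA -(commute_gpowr n (erefl (gmul Z Z))).
by rewrite -!gmulA.
Qed.

Lemma gpow_mul_aZ m n :
  gmul (gpow a m) (gpow Z n) = gmul (gpow Y (m * n)) (gmul (gpow Z n) (gpow a m)).
Proof.
elim: m => [|m IHm] /=; first by rewrite !gmul1 mulg1.
rewrite -gmulA IHm gmulA (commute_gpowr _ (commute_sym cYa)) -gmulA (gmulA a).
by rewrite (mulg_gpowZ _ (commg_mul YaZ) cYZ) mulSnr gpowD -!gmulA.
Qed.

Lemma gpow_mul_collect n : gpow (gmul a b) n =
  gmul (gpow X 'C(n, 3))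
  (gmul (gpow Y (2 * 'C(n, 3) + 'C(n, 2)))
  (gmul (gpow Z 'C(n, 2))
  (gmul (gpow a n) (gpow b n)))).
Proof.
elim: n => [|n IHn]; first by rewrite /= !gmul1.
have exps : 2 * ('C(n, 3) + 'C(n, 2)) + ('C(n, 2) + n) =
            (2 * 'C(n, 3) + 'C(n, 2)) + n * n by have := double_bin2_add n; lia.
rewrite gpowSr IHn -!gmulA (gmulA (gpow b n) a) gpow_mul_ba.
rewrite !binS bin1 exps (gpowD X) (gpowD Y (2 * _ + _)) (gpowD Z) !gpowSr -!gmulA.
congr (gmul _ _).
rewrite (mulgA_commute _ (commute_gpow _ _ cXa)) (mulgA_commute _ (commute_gpow _ _ cXZ)).
rewrite (mulgA_commute _ (commute_gpow _ _ cXY)); congr (gmul _ _); congr (gmul _ _).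
rewrite (gmulA (gpow a n) (gpow Z n)) gpow_mul_aZ -!gmulA.
by rewrite (mulgA_commute _ (commute_gpow _ _ cYZ)) (gmulA (gpow a n) a) -gpowSr /= -!gmulA.
Qed.

End Collection.

Theorem theorem3p8 (G : group) (hG : nilpotent_of_class G 5)
  (W : group) (w : G -> G -> W) (hw : exterior_pairing w)
  (g1 g2 h1 h2 : G) (n : nat) :
  let c1 := gcomm g1 h1 in
  let c2 := gcomm g2 h2 in
  gpow (gmul (w g1 h1) (w g2 h2)) n =
  gmul (gpow (w c2 (gcomm c2 c1)) 'C(n, 3))
  (gmul (gpow (w c1 (gcomm c2 c1)) (2 * 'C(n, 3) + 'C(n, 2)))
  (gmul (gpow (w c2 c1) 'C(n, 2))
  (gmul (gpow (w g1 h1) n) (gpow (w g2 h2) n)))).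
Proof.
move=> c1 c2; case: hw => wMl wMr _; set d := gcomm c2 c1.
have c2_Z4 : upper_central 4 c2.
  by apply: (lcs_upper_central (k := 1) hG) => //; apply: gen_in; exists g2, h2.
have d_Z2 : upper_central 2 d by apply: upper_central_commg_comm.
have cd_1 g h : gcomm (gcomm g h) d = gone G.
  by rewrite commgC (upper_central_commg_comm g h d_Z2) invg1.
have wC := commg_pairing wMl wMr.
have cwd x u v : gcomm x d = gone G -> commute (w x d) (w u v).
  by move=> xd_1; apply: commg1_commute; rewrite wC xd_1 (pairing1l wMl).
by apply: gpow_mul_collect; rewrite ?wC //; apply: cwd; rewrite cd_1.
Qed.
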